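(* Let $(\mathcal A,d)$ be a DGA and let $a,b_1,\dots,b_n\in\mathcal A$ be closed elements such that the degree $|a|$ is even and $a\wedge b_i$ is exact for all $i$. Let $\xi_i$ be any elements with $d\xi_i=a\wedge b_i$. Then $$c=\sum_{i=1}^n \overline{\xi_1}\wedge\cdots\wedge\overline{\xi_{i-1}}\wedge b_i\wedge\xi_{i+1}\wedge\cdots\wedge\xi_n$$ is closed, where $\overline{\xi}=(-1)^{|\xi|}\xi$.
   Context: A DGA is a graded-commutative differential graded algebra over $\mathbb R$ with differential of degree $+1$ satisfying the graded Leibniz rule; $|x|$ denotes the degree of $x$. *)

From HB Require Import structures.
From mathcomp Require Import all_boot all_order all_algebra.
From mathcomp Require Import reals.
Set Implicit Arguments. Unset Strict Implicit. Unset Printing Implicit Defensive.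
Import Order.TTheory GRing.Theory Num.Theory.
Local Open Scope ring_scope.

(* The underlying algebra is A (an associative unital
   R-algebra); G n is the homogeneous component of degree n; d is the
   differential.  *)
Definition is_cdga (R : realType) (A : algType R) (G : nat -> {pred A})
    (d : A -> A) : Prop :=
  (forall n, 0 \in G n) /\
      (forall n (c : R) x y, x \in G n -> y \in G n -> c *: x + y \in G n) /\
  (* A is the direct sum of the G n *)
      (forall x : A, exists (N : nat) (f : nat -> A),
          (forall k, f k \in G k) /\ x = \sum_(k < N) f k) /\
      (forall (N : nat) (f : nat -> A), (forall k, f k \in G k) ->
          \sum_(k < N) f k = 0 -> forall k, (k < N)%N -> f k = 0) /\
      1 \in G 0%N /\
      (forall p q x y, x \in G p -> y \in G q -> x * y \in G (p + q)%N) /\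
      (forall p q x y, x \in G p -> y \in G q ->
          x * y = ((-1 : R) ^+ (p * q)) *: (y * x)) /\
      (forall (c : R) x y, d (c *: x + y) = c *: d x + d y) /\
      (forall p x, x \in G p -> d x \in G p.+1) /\
      (forall x, d (d x) = 0) /\
      (forall p x y, x \in G p ->
          d (x * y) = d x * y + ((-1 : R) ^+ p) *: (x * d y)).

Definition bar (R : realType) (A : algType R) (r : nat) (xi : A) : A :=
  ((-1 : R) ^+ r) *: xi.

From HB Require Import structures.
From mathcomp Require Import all_boot all_order all_algebra.
From mathcomp Require Import reals.
Import Order.TTheory GRing.Theory Num.Theory.
Local Open Scope ring_scope.

(* Writing P = xi_1 ... xi_n, one shows by induction on n that d P = a c and
   d c = 0 simultaneously.  Splitting off xi_1 gives P = xi_1 P' and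
   c = b_1 P' + bar xi_1 c'.  As a has even degree it is central, and the
   Leibniz rule reduces d c to ((-1)^|b_1| + (-1)^|xi_1|) a b_1 c'.  This
   vanishes because a b_1 = d xi_1 is homogeneous of both degrees |a| + |b_1|
   and |xi_1| + 1: either it is zero or |b_1| and |xi_1| have opposite
   parities. *)

Section CdgaTheory.
Local Set Implicit Arguments.
Variables (R : realType) (A : algType R) (G : nat -> {pred A}) (d : A -> A).

Definition leibniz_sum n (r : 'I_n -> nat) (b xi : 'I_n -> A) : A :=
  \sum_(i < n) ((\prod_(j < n | (j < i)%N) bar (r j) (xi j)) * b i
                 * \prod_(j < n | (i < j)%N) xi j).

Lemma leibniz_sum_recl n (r : 'I_n.+1 -> nat) (b xi : 'I_n.+1 -> A) :
  leibniz_sum r b xi =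
    b ord0 * \prod_(j < n) xi (lift ord0 j)
    + bar (r ord0) (xi ord0) * leibniz_sum (r \o lift ord0) (b \o lift ord0)
                                           (xi \o lift ord0).
Proof.
rewrite /leibniz_sum big_ord_recl; congr (_ + _).
  by rewrite big_pred0 // mul1r big_mkcond big_ord_recl /= mul1r.
rewrite mulr_sumr; apply: eq_bigr => i _.
rewrite (big_mkcond (fun j : 'I_n.+1 => (j < _)%N)) big_ord_recl /=.
rewrite (big_mkcond (fun j : 'I_n.+1 => (_ < j)%N)) big_ord_recl /= mul1r.
rewrite -!big_mkcond /= !mulrA; congr (_ * _ * _ * _);
  by apply: eq_bigl => j; rewrite !bump0 ltnS.
Qed.

Hypothesis HA : is_cdga G d.

Lemma cdga_homog_lin n c x y : x \in G n -> y \in G n -> c *: x + y \in G n.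
Proof. by case: HA => _ [H _]; apply: H. Qed.

Lemma cdga_homog0 n : 0 \in G n.
Proof. by case: HA. Qed.

Lemma cdga_homogZ n c x : x \in G n -> c *: x \in G n.
Proof. by move=> Gx; rewrite -[c *: x]addr0 cdga_homog_lin ?cdga_homog0. Qed.

Lemma cdga_homog1 : (1 : A) \in G 0%N.
Proof. by case: HA => _ [_ [_ [_ [H _]]]]. Qed.

Lemma cdga_homogM m n x y : x \in G m -> y \in G n -> x * y \in G (m + n)%N.
Proof. by case: HA => _ [_ [_ [_ [_ [H _]]]]]; apply: H. Qed.

Lemma cdga_mulC m n x y : x \in G m -> y \in G n ->
  x * y = ((-1 : R) ^+ (m * n)) *: (y * x).
Proof. by case: HA => _ [_ [_ [_ [_ [_ [H _]]]]]]; apply: H. Qed.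

Lemma cdga_homog_d n x : x \in G n -> d x \in G n.+1.
Proof. by case: HA => _ [_ [_ [_ [_ [_ [_ [_ [H _]]]]]]]]; apply: H. Qed.

Lemma cdga_dZD c x y : d (c *: x + y) = c *: d x + d y.
Proof. by case: HA => _ [_ [_ [_ [_ [_ [_ [H _]]]]]]]. Qed.

Lemma cdga_leibniz n x y : x \in G n ->
  d (x * y) = d x * y + ((-1 : R) ^+ n) *: (x * d y).
Proof. by case: HA => _ [_ [_ [_ [_ [_ [_ [_ [_ [_ H]]]]]]]]]; apply: H. Qed.

Lemma cdga_d0 : d 0 = 0.
Proof.
have := cdga_dZD 1 0 0; rewrite !scale1r !addr0.
by move=> dd0; apply: (addrI (d 0)); rewrite addr0 -dd0.
Qed.

Lemma cdga_dD x y : d (x + y) = d x + d y.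
Proof. by have := cdga_dZD 1 x y; rewrite !scale1r. Qed.

Lemma cdga_dZ c x : d (c *: x) = c *: d x.
Proof. by rewrite -[c *: x]addr0 cdga_dZD cdga_d0 addr0. Qed.

Lemma cdga_d1 : d 1 = 0.
Proof.
have := cdga_leibniz 1 cdga_homog1; rewrite !mulr1 expr0 scale1r mul1r.
by move=> dd1; apply: (addrI (d 1)); rewrite addr0 -dd1.
Qed.

(* Directness of the sum, applied to the family with x in degree m and
   -x in degree n. *)
Lemma cdga_homog_eq0 m n x : x \in G m -> x \in G n -> m <> n -> x = 0.
Proof.
move=> Gmx Gnx neq_mn; case: HA => _ [_ [_ [Hdirect _]]].
pose f k := (if k == m then x else 0) - (if k == n then x else 0).
have Gf k : f k \in G k.
  rewrite /f; case: eqP => [->|_]; case: eqP => [eq_kn|_].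
  - by case: neq_mn; rewrite eq_kn.
  - by rewrite subr0.
  - by rewrite sub0r -scaleN1r cdga_homogZ // eq_kn.
  - by rewrite subr0 cdga_homog0.
have sum_f : \sum_(k < (maxn m n).+1) f k = 0.
  rewrite sumrB -!(big_mkcond (fun k : 'I__ => (k : nat) == _)).
  by rewrite !big_ord1_eq !ltnS leq_maxl leq_maxr subrr.
move/(_ _ f Gf sum_f m): Hdirect; rewrite ltnS leq_maxl /f eqxx.
by case: eqP => // _; rewrite subr0 => ->.
Qed.

Lemma cdga_homog_sign m n x : x \in G m -> x \in G n ->
  ((-1 : R) ^+ m) *: x = ((-1 : R) ^+ n) *: x.
Proof.
move=> Gmx Gnx; have [-> //|neq_mn] := eqVneq m n.
by rewrite (cdga_homog_eq0 Gmx Gnx (elimN eqP neq_mn)) !scaler0.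
Qed.

Section EvenCentral.
Variables (p : nat) (a : A).
Hypotheses (Ga : a \in G p) (even_p : ~~ odd p).

Lemma cdga_even_commr k x : x \in G k -> a * x = x * a.
Proof.
by move=> Gx; rewrite (cdga_mulC Ga Gx) -signr_odd oddM (negbTE even_p) scale1r.
Qed.

Lemma d_prod_leibniz_sum_cons (x b P C : A) (r q : nat) :
    x \in G r -> b \in G q -> d b = 0 -> d x = a * b ->
    d P = a * C -> d C = 0 ->
  d (x * P) = a * (b * P + bar r x * C) /\ d (b * P + bar r x * C) = 0.
Proof.
move=> Gx Gb db_0 dx_ab dP dC_0; rewrite /bar -!scalerAl.
split.
  rewrite (cdga_leibniz _ Gx) dx_ab dP mulrDr mulrA.
  by rewrite -(cdga_even_commr Gx) -scalerAr !mulrA.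
have sign_ab : ((-1 : R) ^+ q) *: (a * b) = - ((-1) ^+ r) *: (a * b).
  have G_ab : a * b \in G r.+1 by rewrite -dx_ab cdga_homog_d.
  have := cdga_homog_sign (cdga_homogM Ga Gb) G_ab.
  rewrite exprD -[(-1) ^+ p]signr_odd (negbTE even_p) mul1r exprS mulN1r.
  by rewrite scaleNr.
rewrite cdga_dD (cdga_leibniz _ Gb) db_0 mul0r add0r dP cdga_dZ.
rewrite (cdga_leibniz _ Gx) dC_0 mulr0 scaler0 addr0 dx_ab.
rewrite mulrA -(cdga_even_commr Gb) !(scalerAl _ (a * b)) sign_ab.
by rewrite scaleNr mulNr addNr.
Qed.

Lemma d_prod_leibniz_sum n (q r : 'I_n -> nat) (b xi : 'I_n -> A) :
    (forall i, b i \in G (q i)) -> (forall i, d (b i) = 0) ->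
    (forall i, xi i \in G (r i)) -> (forall i, d (xi i) = a * b i) ->
  d (\prod_(i < n) xi i) = a * leibniz_sum r b xi
  /\ d (leibniz_sum r b xi) = 0.
Proof.
elim: n => [|n IHn] in q r b xi *; move=> Gb db_0 Gxi dxi.
  by rewrite /leibniz_sum !big_ord0 cdga_d1 cdga_d0 mulr0.
have [dP dC_0] := IHn (q \o lift ord0) (r \o lift ord0) (b \o lift ord0)
  (xi \o lift ord0) (fun i => Gb _) (fun i => db_0 _) (fun i => Gxi _)
  (fun i => dxi _).
rewrite big_ord_recl leibniz_sum_recl.
exact: d_prod_leibniz_sum_cons (Gxi ord0) (Gb ord0) (db_0 ord0) (dxi ord0) dP dC_0.
Qed.

End EvenCentral.
End CdgaTheory.

Arguments leibniz_sum {R A n}.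
Arguments d_prod_leibniz_sum {R A G d} HA {p a} Ga even_p {n q r b xi}.

Theorem proposition2p2 (R : realType) (A : algType R) (G : nat -> {pred A})
    (d : A -> A) (HA : is_cdga G d)
    (n : nat) (p : nat) (a : A) (q : 'I_n -> nat) (b : 'I_n -> A)
    (r : 'I_n -> nat) (xi : 'I_n -> A) :
  a \in G p -> ~~ odd p -> d a = 0 ->
  (forall i, b i \in G (q i)) -> (forall i, d (b i) = 0) ->
  (forall i, exists y, d y = a * b i) ->
  (forall i, xi i \in G (r i)) -> (forall i, d (xi i) = a * b i) ->
  d (\sum_(i < n)
       ((\prod_(j < n | (j < i)%N) bar (r j) (xi j)) * b i
          * \prod_(j < n | (i < j)%N) xi j)) = 0.
Proof.
move=> Ga even_p _ Gb db_0 _ Gxi dxi.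
by have [_ dC_0] := d_prod_leibniz_sum HA Ga even_p Gb db_0 Gxi dxi.
Qed.
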